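(* There exists an $F_\sigma$ set $E\subseteq\mathbb{R}$ having strong uniform density type (SUDT) such that for every $G_\delta$ set $\widetilde{E}\subseteq\mathbb{R}$ with $|E\,\triangle\,\widetilde{E}|=0$, the set $\widetilde{E}$ does not have uniform density type (UDT).
   Context: $|A|$ denotes Lebesgue measure. For a measurable $E\subseteq\mathbb{R}$ and $\gamma,\delta>0$ let $E^{\gamma,\delta}=\{x\in\mathbb{R} : \forall r\in(0,\delta],\ \max\{|(x-r,x)\cap E|/r,\ |(x,x+r)\cap E|/r\}\ge\gamma\}$. A measurable set $E$ has uniform density type (UDT) if there exist sequences $\gamma_n\nearrow 1$ and $\delta_n\searrow 0$ (positive) such that $E\subseteq\bigcap_{k=1}^\infty\bigcup_{n=k}^\infty E^{\gamma_n,\delta_n}$. It has strong uniform density type (SUDT) if there exist sequences $\gamma_n\nearrow 1$ and $\delta_n\searrow 0$ such that $E\subseteq\bigcup_{k=1}^\infty\bigcap_{n=k}^\infty E^{\gamma_n,\delta_n}$. *)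

From mathcomp Require Import all_boot all_algebra all_classical all_reals all_analysis.
From mathcomp Require Import Rstruct Rstruct_topology borel_hierarchy.
Local Open Scope classical_set_scope.
Local Open Scope ring_scope.

Notation R := Rdefinitions.R.

(* The carrier of the (completed) Lebesgue measure on R, i.e. R equipped with
   the sigma-algebra of Lebesgue measurable sets. *)
Definition LebT : Type :=
  ltac:(let t := type of (@completed_lebesgue_measure R) in
        match t with set ?T -> _ => exact T end).

Definition leb (A : set R) : \bar R := @completed_lebesgue_measure R (A : set LebT).

Definition Lmeasurable (E : set R) : Prop := measurable (E : set LebT).

Definition Egd (E : set R) (g d : R) : set R :=
  [set x : R | forall r : R, 0 < r -> r <= d ->
     (g%:E <= maxe (leb (`](x - r)%R, x[ `&` E) * (r^-1)%:E)
                   (leb (`]x, (x + r)%R[ `&` E) * (r^-1)%:E))%E].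

Definition incr_to_one (g : nat -> R) : Prop :=
  (forall n, 0 < g n) /\ {homo g : m n / (m <= n)%N >-> m <= n} /\ g @ \oo --> (1 : R).

Definition decr_to_zero (d : nat -> R) : Prop :=
  (forall n, 0 < d n) /\ {homo d : m n / (m <= n)%N >-> n <= m} /\ d @ \oo --> (0 : R).

Definition UDT (E : set R) : Prop :=
  Lmeasurable E /\
  exists g d : nat -> R, incr_to_one g /\ decr_to_zero d /\
    E `<=` \bigcap_k \bigcup_(n in [set n | (k <= n)%N]) Egd E (g n) (d n).

Definition SUDT (E : set R) : Prop :=
  Lmeasurable E /\
  exists g d : nat -> R, incr_to_one g /\ decr_to_zero d /\
    E `<=` \bigcup_k \bigcap_(n in [set n | (k <= n)%N]) Egd E (g n) (d n).

From Stdlib Require Import PArith Lia.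
From mathcomp Require Import all_boot all_order all_algebra all_classical all_reals all_analysis.
From mathcomp Require Import Rstruct Rstruct_topology borel_hierarchy.
From mathcomp Require Import lra ring zify.
Import Order.TTheory GRing.Theory Num.Theory.
Local Open Scope classical_set_scope.
Local Open Scope ring_scope.

(* E is the union of fat Cantor sets, one in the middle of each interval of a
   tree of "free" intervals: the children of a free interval are the two
   components to the left and to the right of its Cantor set, and the gaps of
   that Cantor set. The gaps of each Cantor set shrink doubly exponentially, so
   at each of its points the Cantor set has a one-sided density tending to 1
   uniformly, which gives SUDT. The Cantor sets become relatively smaller along
   an enumeration of the tree, so E fills at most a quarter of each free
   interval, while short free intervals are dense in [0, 1].
   If a G_delta set Et equals E up to a null set, then Et is a dense G_delta in
   [0, 1], as E has positive measure in every subinterval. The middle quarters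
   of the free intervals of length at most 2^-k form dense open sets, so by
   Baire's theorem some y in Et lies in the middle quarter of arbitrarily short
   free intervals I. At scale r = 3|I|/8 both (y - r, y) and (y, y + r) lie in I,
   so both one-sided densities of Et at y are at most (|I|/4)/r = 2/3, and Et is
   not UDT. *)

Local Open Scope ereal_scope.

Lemma lebE (A : set R) : leb A = lebesgue_measure A.
Proof. reflexivity. Qed.

Lemma leb_ge0 (A : set R) : 0 <= leb A.
Proof. by rewrite lebE; exact: outer_measure_ge0. Qed.

Lemma leb_set0 : leb set0 = 0.
Proof. by rewrite lebE; exact: outer_measure0. Qed.

Lemma le_leb {A B : set R} : A `<=` B -> leb A <= leb B.
Proof. by move=> AB; rewrite !lebE; exact: le_outer_measure. Qed.

Lemma leb_bigcup_le (F : nat -> set R) :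
  leb (\bigcup_n F n) <= \sum_(0 <= i <oo) leb (F i).
Proof. by rewrite !lebE; exact: outer_measure_sigma_subadditive. Qed.

Lemma leb_setI_setD (A B : set R) : leb A <= leb (A `&` B) + leb (A `\` B).
Proof.
apply: (@le_trans _ _ (leb ((A `&` B) `|` (A `\` B)))).
  by apply: le_leb => x Ax; case: (pselect (B x)) => Bx; [left|right].
by rewrite !lebE; exact: outer_measureU2.
Qed.

Lemma leb_setI_ge {A B : set R} {r c : R} :
  leb A = r%:E -> leb (A `\` B) <= c%:E -> (r - c)%:E <= leb (A `&` B).
Proof.
move=> Ar ABc; rewrite EFinB leeBlDr // -Ar.
by apply: le_trans (leb_setI_setD A B) _; apply: leeD.
Qed.

Lemma leb_setI_null_le (A : set R) {B C : set R} :
  leb (B `\` C) = 0 -> leb (A `&` B) <= leb (A `&` C).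
Proof.
move=> BC0; apply: le_trans (leb_setI_setD (A `&` B) C) _.
have -> : leb ((A `&` B) `\` C) = 0.
  by apply/eqP; rewrite eq_le leb_ge0 andbT -BC0; apply: le_leb => x [[_ ?] ?].
by rewrite adde0; apply: le_leb => x [[? _] ?].
Qed.

Lemma leb_symdiff_eq0 (A B : set R) : leb ((A `\` B) `|` (B `\` A)) = 0 ->
  leb (A `\` B) = 0 /\ leb (B `\` A) = 0.
Proof.
by move=> AB0; split; apply/eqP; rewrite eq_le leb_ge0 andbT -AB0;
  apply: le_leb => x ?; [left|right].
Qed.

Lemma leb_gt0_neq0 {A : set R} : 0 < leb A -> A !=set0.
Proof. by apply: contraPP => /set0P/negP/negPn/eqP ->; rewrite leb_set0 ltxx. Qed.

Lemma le_density {A B : set R} {g r : R} : (0 < r)%R -> A `<=` B ->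
  (g * r)%:E <= leb A -> g%:E <= leb B * (r^-1)%:E.
Proof.
move=> r0 AB grA; have -> : g = (g * r * r^-1)%R by rewrite -mulrA divff ?mulr1 // gt_eqF.
rewrite EFinM; apply: lee_wpmul2r; first by rewrite lee_fin invr_ge0 ltW.
exact: le_trans grA (le_leb AB).
Qed.

Local Close Scope ereal_scope.

Lemma set_itv_oo (x y : R) : [set z | x < z /\ z < y] = `]x, y[%classic.
Proof.
by apply/seteqP; split => z /=; rewrite in_itv /=; [case=> -> ->|case/andP => -> ->].
Qed.

Lemma set_itv_cc (x y : R) : [set z | x <= z /\ z <= y] = `[x, y]%classic.
Proof.
by apply/seteqP; split => z /=; rewrite in_itv /=; [case=> -> ->|case/andP => -> ->].
Qed.

Lemma leb_itv_oo (x y : R) : x <= y -> leb [set z | x < z /\ z < y] = (y - x)%:E.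
Proof.
move=> xy; rewrite set_itv_oo lebE lebesgue_measure_itv /= lte_fin.
by case: ltgtP xy => // -> _; rewrite subrr.
Qed.

Lemma leb_itv_cc (x y : R) : x <= y -> leb [set z | x <= z /\ z <= y] = (y - x)%:E.
Proof.
move=> xy; rewrite set_itv_cc lebE lebesgue_measure_itv /= lte_fin.
by case: ltgtP xy => // -> _; rewrite subrr.
Qed.

Lemma open_itv_oo (x y : R) : open [set z | x < z /\ z < y].
Proof. by rewrite set_itv_oo; exact: interval_open. Qed.

Lemma closed_itv_cc (x y : R) : closed [set z | x <= z /\ z <= y].
Proof. by rewrite set_itv_cc; exact: interval_closed. Qed.

Definition exp2N (n : nat) : R := (2 ^+ n)^-1.

Lemma exp2N_gt0 n : 0 < exp2N n.
Proof. by rewrite invr_gt0 exprn_gt0. Qed.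

Lemma exp2N_ge0 n : 0 <= exp2N n.
Proof. exact/ltW/exp2N_gt0. Qed.

Lemma exp2N0 : exp2N 0 = 1.
Proof. by rewrite /exp2N expr0 invr1. Qed.

Lemma exp2NS n : exp2N n.+1 = exp2N n / 2.
Proof. by rewrite /exp2N exprS invfM mulrC. Qed.

Lemma exp2ND m n : exp2N (m + n) = exp2N m * exp2N n.
Proof. by rewrite /exp2N exprD invfM. Qed.

Lemma exp2N_natr n : exp2N n = ((2 ^ n)%N%:R)^-1.
Proof. by rewrite /exp2N natrX. Qed.

Lemma exp2N_le m n : (m <= n)%N -> exp2N n <= exp2N m.
Proof. by move=> mn; rewrite lef_pV2 ?posrE ?exprn_gt0 // ler_eXn2l // ltr1n. Qed.

Lemma exp2N_le1 n : exp2N n <= 1.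
Proof. by rewrite -exp2N0; exact: exp2N_le. Qed.

Lemma exp2N_small {e : R} : 0 < e -> exists n, exp2N n < e.
Proof.
move=> e0; exists (Num.Def.archi_bound e^-1).
rewrite /exp2N -[X in _ < X]invrK ltf_pV2 ?posrE ?exprn_gt0 ?invr_gt0 //.
exact: upper_nthrootP.
Qed.

Lemma cvg_exp2N_dist (u : nat -> R) (l : R) :
  (forall n, `|l - u n| <= exp2N n) -> u @ \oo --> l.
Proof.
move=> ul; apply/(@cvgrPdist_lt _ R^o) => e e0; have [k ke] := exp2N_small e0.
exists k => // n /= kn; apply: le_lt_trans (ul n) _.
by apply: le_lt_trans ke; exact: exp2N_le.
Qed.

(** * Fat Cantor sets *)

(* [positive] encodes the nodes of the infinite binary tree: [xH] is the root,
   [xO M] and [xI M] are the two children of [M]. *)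
Fixpoint depth (M : positive) : nat :=
  match M with xH => 0 | xO M' | xI M' => (depth M').+1 end.

Lemma depth_bound M : (2 ^ depth M <= Pos.to_nat M /\ Pos.to_nat M < 2 ^ (depth M).+1)%N.
Proof.
elim: M => [M [IH1 IH2]|M [IH1 IH2]|] /=.
- by rewrite Pos2Nat.inj_xI !expnS; rewrite expnS in IH2; split; lia.
- by rewrite Pos2Nat.inj_xO !expnS; rewrite expnS in IH2; split; lia.
- by rewrite Pos2Nat.inj_1.
Qed.

Lemma Pos_of_succ_nat_pred M : Pos.of_succ_nat (Pos.to_nat M).-1 = M.
Proof.
by apply: Pos2Nat.inj; rewrite SuccNat2Pos.id_succ; have := Pos2Nat.is_pos M; lia.
Qed.

Fixpoint ancestor (M N : positive) : Prop :=
  M = N \/ match N with xH => False | xO N' | xI N' => ancestor M N' end.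

Lemma ancestor_refl M : ancestor M M.
Proof. by case: M => *; left. Qed.

Lemma ancestor_root N : ancestor xH N.
Proof. by elim: N => [N IH|N IH|] /=; [right|right|left]. Qed.

Lemma ancestor_leq {M N} : ancestor M N -> (Pos.to_nat M <= Pos.to_nat N)%N.
Proof.
elim: N => [N IH|N IH|] /= [->//|].
- by move=> /IH; rewrite Pos2Nat.inj_xI; lia.
- by move=> /IH; rewrite Pos2Nat.inj_xO; lia.
- by [].
Qed.

Lemma ancestor_antisym {M N} : ancestor M N -> ancestor N M -> M = N.
Proof.
move=> /ancestor_leq MN /ancestor_leq NM; apply: Pos2Nat.inj.
by apply/eqP; rewrite eqn_leq MN NM.
Qed.

Lemma ancestor_child {M N} : ancestor M N -> M <> N ->
  ancestor (xO M) N \/ ancestor (xI M) N.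
Proof.
elim: N => [N IH|N IH|] /=.
- case=> [->//|MN'] MN; case: (Pos.eq_dec M N) => [->|neqMN]; first by right; left.
  by case: (IH MN' neqMN) => ?; [left|right]; right.
- case=> [->//|MN'] MN; case: (Pos.eq_dec M N) => [->|neqMN]; first by left; left.
  by case: (IH MN' neqMN) => ?; [left|right]; right.
- by case.
Qed.

Section FatCantor.
Variables (a lam : R).
Hypothesis lam_gt0 : 0 < lam.

Definition gap_len (j : nat) : R := lam * exp2N (8 * 2 ^ j.+1).

Fixpoint block_len (j : nat) : R :=
  if j is j'.+1 then (block_len j' - gap_len j') / 2 else lam.

Lemma gap_len_gt0 j : 0 < gap_len j.
Proof. by rewrite mulr_gt0 ?exp2N_gt0. Qed.

Lemma gap_len_le j : gap_len j <= lam * exp2N (2 * j) / 2.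
Proof.
rewrite /gap_len -mulrA ler_pM2l // -exp2NS; apply: exp2N_le.
by have := ltn_expl j.+1 (isT : (1 < 2)%N); rewrite expnS; lia.
Qed.

Lemma block_len_ge j : lam * exp2N (2 * j) <= block_len j.
Proof.
elim: j => [|j IH] /=; first by rewrite muln0 exp2N0 mulr1.
have := gap_len_le j; have -> : (2 * j.+1 = (2 * j).+2)%N by lia.
by rewrite !exp2NS; lra.
Qed.

Lemma block_len_gt0 j : 0 < block_len j.
Proof. by apply: lt_le_trans (block_len_ge j); rewrite mulr_gt0 ?exp2N_gt0. Qed.

Lemma gap_len_le_half j : gap_len j <= block_len j / 2.
Proof. by have := gap_len_le j; have := block_len_ge j; lra. Qed.

Lemma block_lenS_lt j : block_len j.+1 < block_len j / 2.
Proof. by have := gap_len_gt0 j; rewrite /=; lra. Qed.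

Lemma block_len_gap j : block_len j - block_len j.+1 - block_len j.+1 = gap_len j.
Proof. by rewrite /=; lra. Qed.

Lemma block_len_le j : block_len j <= lam * exp2N j.
Proof.
elim: j => [|j IH]; first by rewrite exp2N0 mulr1.
by have := block_lenS_lt j; rewrite exp2NS; lra.
Qed.

Lemma block_len_le_lam j : block_len j <= lam.
Proof. by apply: le_trans (block_len_le j) _; rewrite ger_pMr // exp2N_le1. Qed.

Lemma block_len0 : block_len 0 = lam.
Proof. by []. Qed.

Arguments block_len : simpl never.

Lemma block_len_small e : 0 < e -> exists n, block_len n < e.
Proof.
move=> e0; have [n] := exp2N_small (divr_gt0 e0 lam_gt0).
rewrite ltr_pdivlMr // mulrC => ne; exists n.
exact: le_lt_trans (block_len_le n) ne.
Qed.

Lemma block_len_scale r : 0 < r -> 2 * r <= lam ->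
  exists m, 2 * r <= block_len m /\ block_len m.+1 < 2 * r.
Proof.
move=> r0 rlam; have [J] := @block_len_small (2 * r) ltac:(lra).
elim: J => [|J IH] J2r; first by rewrite block_len0 in J2r; lra.
by case: (ltP (block_len J) (2 * r)) => ?; [exact: IH|exists J].
Qed.

Fixpoint block_start (M : positive) : R :=
  match M with
  | xH => a
  | xO M' => block_start M'
  | xI M' => block_start M' + block_len (depth M') - block_len (depth M').+1
  end.

Definition block M : set R :=
  [set x | block_start M <= x /\ x <= block_start M + block_len (depth M)].

Definition gap M : set R :=
  [set x | block_start M + block_len (depth M).+1 < x /\
           x < block_start M + block_len (depth M) - block_len (depth M).+1].

Definition cantor : set R :=
  [set x | (a <= x /\ x <= a + lam) /\ forall M, ~ gap M x].

Lemma subset_block_xO {M} : block (xO M) `<=` block M.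
Proof.
move=> x [] /= ? ?; have := block_lenS_lt (depth M).
by have := block_len_gt0 (depth M).+1; split; lra.
Qed.

Lemma subset_block_xI {M} : block (xI M) `<=` block M.
Proof.
move=> x [] /= ? ?; have := block_lenS_lt (depth M).
by have := block_len_gt0 (depth M).+1; split; lra.
Qed.

Lemma subset_block_ancestor {M N} : ancestor M N -> block N `<=` block M.
Proof.
elim: N => [N IH|N IH|] /= [->//|].
- by move=> /IH; apply: subset_trans; exact: subset_block_xI.
- by move=> /IH; apply: subset_trans; exact: subset_block_xO.
- by [].
Qed.

Lemma block_subset_hull {M} : block M `<=` [set x | a <= x /\ x <= a + lam].
Proof. exact: subset_block_ancestor (ancestor_root M). Qed.

Lemma block_bounds M : a <= block_start M /\ block_start M + block_len (depth M) <= a + lam.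
Proof.
have := block_len_gt0 (depth M) => ?.
have [? _] := @block_subset_hull M (block_start M) ltac:(rewrite /block /=; split; lra).
have [_ ?] := @block_subset_hull M (block_start M + block_len (depth M))
  ltac:(rewrite /block /=; split; lra).
by [].
Qed.

Lemma gap_subset_block {M} : gap M `<=` block M.
Proof. by move=> x [] /= ? ?; have := block_len_gt0 (depth M).+1; split; lra. Qed.

Lemma gap_subset_hull {M} : gap M `<=` [set x | a <= x /\ x <= a + lam].
Proof. by move=> x /gap_subset_block /block_subset_hull. Qed.

Lemma gap_block_xO_disj {M x} : gap M x -> ~ block (xO M) x.
Proof. by move=> [h1 h2] [h3 h4]; rewrite /= in h1 h2 h3 h4; lra. Qed.

Lemma gap_block_xI_disj {M x} : gap M x -> ~ block (xI M) x.
Proof. by move=> [h1 h2] [h3 h4]; rewrite /= in h1 h2 h3 h4; lra. Qed.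

Lemma block_xO_xI_disj {M x} : block (xO M) x -> ~ block (xI M) x.
Proof.
move=> [h1 h2] [h3 h4]; rewrite /= in h1 h2 h3 h4.
by have := block_lenS_lt (depth M); lra.
Qed.

Lemma block_gap_cover {M x} : block M x -> ~ gap M x -> block (xO M) x \/ block (xI M) x.
Proof.
move=> [? ?] nMx; rewrite /block /=.
have [?|lt_x] := leP x (block_start M + block_len (depth M).+1); first by left.
right; split; last lra.
by apply/negP => ?; apply: nMx; split => //; rewrite ltNge; exact/negP.
Qed.

Lemma block_comparable {M N x} : block M x -> block N x -> ancestor M N \/ ancestor N M.
Proof.
elim: N M => [N IH|N IH|] M Mx Nx /=.
- have [?|NM] := IH M Mx (subset_block_xI _ Nx); first by left; right.
  case: (Pos.eq_dec N M) => [<-|neqNM]; first by left; right; exact: ancestor_refl.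
  have [MN|?] := ancestor_child NM neqNM; last by right.
  by exfalso; apply: (block_xO_xI_disj (subset_block_ancestor MN _ Mx) Nx).
- have [?|NM] := IH M Mx (subset_block_xO _ Nx); first by left; right.
  case: (Pos.eq_dec N M) => [<-|neqNM]; first by left; right; exact: ancestor_refl.
  have [?|MN] := ancestor_child NM neqNM; first by right.
  by exfalso; apply: (block_xO_xI_disj Nx (subset_block_ancestor MN _ Mx)).
- by right; exact: ancestor_root.
Qed.

Lemma block_gap_ancestor {N M x} : block N x -> gap M x -> ancestor N M.
Proof.
move=> Nx Mx; have [MN|//] := block_comparable (gap_subset_block _ Mx) Nx.
case: (Pos.eq_dec M N) => [->|neqMN]; first exact: ancestor_refl.
have [MN'|MN'] := ancestor_child MN neqMN; exfalso.
  exact: gap_block_xO_disj Mx (subset_block_ancestor MN' _ Nx).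
exact: gap_block_xI_disj Mx (subset_block_ancestor MN' _ Nx).
Qed.

Lemma gap_uniq {M M' x} : gap M x -> gap M' x -> M = M'.
Proof.
move=> Mx M'x; apply: ancestor_antisym.
  exact: block_gap_ancestor (gap_subset_block _ Mx) M'x.
exact: block_gap_ancestor (gap_subset_block _ M'x) Mx.
Qed.

Lemma cantor_blocks {x} : cantor x -> forall n, exists N, depth N = n /\ block N x.
Proof.
move=> [[? ?] Kx]; elim=> [|n [N [<- Nx]]]; first by exists xH.
by have [?|?] := block_gap_cover Nx (Kx N); [exists (xO N)|exists (xI N)].
Qed.

Lemma closed_cantor : closed cantor.
Proof.
have -> : cantor = [set x | a <= x /\ x <= a + lam] `&` \bigcap_M (~` gap M).
  apply/seteqP; split => x [? Kx]; split => //; first by move=> M _; apply: Kx.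
  by move=> M; apply: Kx.
apply: closedI; first exact: closed_itv_cc.
by apply: closed_bigI => M _; apply: open_closedC; exact: open_itv_oo.
Qed.

Lemma leb_gap M : leb (gap M) = (gap_len (depth M))%:E.
Proof.
rewrite /gap leb_itv_oo; first by rewrite -block_len_gap; congr _%:E; ring.
by have := block_len_gap (depth M); have := gap_len_gt0 (depth M); lra.
Qed.

Lemma gap_len_depth_le M : gap_len (depth M) <= lam * exp2N (8 * Pos.to_nat M).
Proof. by rewrite ler_pM2l //; apply: exp2N_le; have := depth_bound M; lia. Qed.

(* Every gap inside [block N] belongs to a node [M >= N]; since
   [gap_len (depth M) <= lam 2^(-8M)], these gaps sum to at most [lam 2^(-7N)]. *)
Lemma leb_block_setD_cantor N :
  (leb (block N `\` cantor) <= (lam * exp2N (7 * Pos.to_nat N))%:E)%E.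
Proof.
set eps := lam * exp2N (7 * Pos.to_nat N).
have eps_ge0 : 0 <= eps by rewrite mulr_ge0 ?exp2N_ge0 // ltW.
pose G i := if (Pos.to_nat N <= i.+1)%N then gap (Pos.of_succ_nat i) else set0.
have NK_G : block N `\` cantor `<=` \bigcup_i G i.
  move=> x [Nx nKx]; have [M Mx] : exists M, gap M x.
    apply: contrapT => nM; apply: nKx; split; first exact: block_subset_hull _ Nx.
    by move=> M Mx; apply: nM; exists M.
  have NM := ancestor_leq (block_gap_ancestor Nx Mx).
  exists (Pos.to_nat M).-1 => //; rewrite /G Pos_of_succ_nat_pred ifT //.
  by have := Pos2Nat.is_pos M; lia.
apply: le_trans (le_leb NK_G) _; apply: le_trans (leb_bigcup_le _) _.
apply: le_trans (epsilon_trick0 xpredT eps_ge0).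
apply: lee_nneseries => [i _ _|i _]; first exact: leb_ge0.
rewrite /G; case: ifP => Ni; last by rewrite leb_set0 lee_fin divr_ge0.
rewrite leb_gap lee_fin; apply: le_trans (gap_len_depth_le _) _.
rewrite SuccNat2Pos.id_succ -exp2N_natr /eps -mulrA ler_pM2l //.
have -> : (8 * i.+1 = 7 * i.+1 + i.+1)%N by lia.
by rewrite exp2ND ler_wpM2r ?exp2N_ge0 // exp2N_le //; lia.
Qed.

Lemma cantor_leb_gt0 : (0 < leb cantor)%E.
Proof.
have hull : leb (block xH) = lam%:E.
  by rewrite /block /= leb_itv_cc ?lerDl ?ltW // addrAC subrr add0r.
have := leb_setI_ge hull (leb_block_setD_cantor xH).
rewrite Pos2Nat.inj_1 muln1 => /le_trans/(_ (le_leb (@subIsetr _ _ _))) K_ge.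
apply: lt_le_trans K_ge; rewrite lte_fin subr_gt0 gtr_pMr //.
by rewrite !exp2NS exp2N0; lra.
Qed.

Lemma gap_meets_itv {s t} : a <= s -> s < t -> t <= a + lam ->
  exists M z, (s < z /\ z < t) /\ gap M z.
Proof.
move=> ? st ?; set m := (s + t) / 2.
case: (pselect (cantor m)) => Km.
  have [n n_st] := @block_len_small ((t - s) / 2) ltac:(lra).
  have [N [Nn [N1 N2]]] := cantor_blocks Km n; rewrite /m Nn in N1 N2.
  exists N, (block_start N + block_len n / 2); rewrite /gap Nn.
  by have := block_lenS_lt n; have := block_len_gt0 n.+1; split; split; lra.
have [M Mm] : exists M, gap M m.
  apply: contrapT => nM; apply: Km; split; first by rewrite /m; split; lra.
  by move=> M Mm; apply: nM; exists M.
by exists M, m; split => //; rewrite /m; split; lra.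
Qed.

Lemma leb_setI_cantor_ge {N} {I : set R} {r} : I `<=` block N -> leb I = r%:E ->
  ((r - lam * exp2N (7 * Pos.to_nat N))%:E <= leb (I `&` cantor))%E.
Proof.
move=> IN Ir; apply: leb_setI_ge Ir _; apply: le_trans (leb_block_setD_cantor N).
by apply: le_leb => z [Iz nKz]; split => //; exact: IN.
Qed.

Lemma cantor_block_at_scale {n x r} : cantor x -> 0 < r -> r <= lam * exp2N (2 * n) / 8 ->
  exists N, block N x /\ 2 * r <= block_len (depth N) /\
    lam * exp2N (7 * Pos.to_nat N) <= exp2N n.+1 * r.
Proof.
move=> Kx r0 rn; have lamn : lam * exp2N (2 * n) <= lam by rewrite ger_pMr // exp2N_le1.
have [m [rm mr]] := @block_len_scale r r0 ltac:(lra).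
have lt_nm : (n < m)%N.
  rewrite ltnNge; apply/negP => mn.
  have e : exp2N (2 * n.+1) = exp2N (2 * n) / 4.
    have -> : (2 * n.+1 = (2 * n).+2)%N by lia.
    by rewrite !exp2NS; lra.
  have := ler_wpM2l (ltW lam_gt0) (@exp2N_le (2 * m.+1) (2 * n.+1) ltac:(lia)).
  by rewrite e; have := block_len_ge m.+1; lra.
have [N [Nm Nx]] := cantor_blocks Kx m; exists N; rewrite Nm; split=> //; split=> //.
have e7 : exp2N (7 * Pos.to_nat N) <= exp2N n.+1 * (exp2N (2 * m.+1) / 2).
  rewrite -exp2NS -exp2ND; apply: exp2N_le.
  have := depth_bound N; rewrite Nm => -[? _].
  by have := ltn_expl m (isT : (1 < 2)%N); lia.
apply: le_trans (_ : lam * (exp2N n.+1 * (exp2N (2 * m.+1) / 2)) <= _).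
  by rewrite ler_pM2l.
by rewrite mulrCA ler_wpM2l ?exp2N_ge0 //; have := block_len_ge m.+1; lra.
Qed.

Lemma cantor_density {n x r} : cantor x -> 0 < r -> r <= lam * exp2N (2 * n) / 8 ->
  (((1 - exp2N n.+1) * r)%:E <= leb ([set z | (x < z)%R /\ (z < x + r)%R] `&` cantor))%E \/
  (((1 - exp2N n.+1) * r)%:E <= leb ([set z | (x - r < z)%R /\ (z < x)%R] `&` cantor))%E.
Proof.
move=> Kx r0 rn; have [N [[? ?] [rN negl]]] := cantor_block_at_scale Kx r0 rn.
have side (I : set R) : I `<=` block N -> leb I = r%:E ->
    (((1 - exp2N n.+1) * r)%:E <= leb (I `&` cantor))%E.
  by move=> IN Ir; apply: le_trans (leb_setI_cantor_ge IN Ir); rewrite lee_fin; lra.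
case: (leP (block_len (depth N) / 2) (x - block_start N)) => xN; [right|left].
- apply: side; first by move=> z [? ?]; rewrite /block /=; split; lra.
  by rewrite leb_itv_oo; [congr _%:E; ring|lra].
- apply: side; first by move=> z [? ?]; rewrite /block /=; split; lra.
  by rewrite leb_itv_oo; [congr _%:E; ring|lra].
Qed.

End FatCantor.

(** * The tree of free intervals *)

(* A node is the list of child indices read from the node up to the root
   [[::]]. The children of a node are indexed by [nat]: [0] and [1] are the two
   components outside the hull of its Cantor set, and [k.+2] is the gap of node
   [Pos.of_succ_nat k] of that Cantor set. *)
Definition cantor_frac (Q : seq nat) : R := exp2N (pickle Q).+3.

Definition child_itv (Q : seq nat) (l u : R) (i : nat) : R * R :=
  let lam := cantor_frac Q * (u - l) in
  let a := (l + u) / 2 - lam / 2 in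
  match i with
  | 0%N => (l, a)
  | 1%N => (a + lam, u)
  | k.+2 => let M := Pos.of_succ_nat k in
            (block_start a lam M + block_len lam (depth M).+1,
             block_start a lam M + block_len lam (depth M) - block_len lam (depth M).+1)
  end.

Fixpoint node_itv (Q : seq nat) : R * R :=
  if Q is i :: Q' then child_itv Q' (node_itv Q').1 (node_itv Q').2 i else (0, 1).

Definition lo Q := (node_itv Q).1.
Definition hi Q := (node_itv Q).2.
Definition clen Q := cantor_frac Q * (hi Q - lo Q).
Definition cstart Q := (lo Q + hi Q) / 2 - clen Q / 2.
Definition free_itv Q : set R := [set x | lo Q < x /\ x < hi Q].
Definition node_cantor Q : set R := cantor (cstart Q) (clen Q).

Lemma cantor_frac_gt0 Q : 0 < cantor_frac Q.
Proof. exact: exp2N_gt0. Qed.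

Lemma cantor_frac_le Q : cantor_frac Q <= 1 / 8.
Proof.
apply: le_trans (@exp2N_le 3 (pickle Q).+3 isT) _.
by rewrite !exp2NS exp2N0; lra.
Qed.

Lemma lo_cons0 Q : lo (0%N :: Q) = lo Q. Proof. by []. Qed.
Lemma hi_cons0 Q : hi (0%N :: Q) = cstart Q. Proof. by []. Qed.
Lemma lo_cons1 Q : lo (1%N :: Q) = cstart Q + clen Q. Proof. by []. Qed.
Lemma hi_cons1 Q : hi (1%N :: Q) = hi Q. Proof. by []. Qed.

Lemma lo_cons_gap Q k : let M := Pos.of_succ_nat k in
  lo (k.+2 :: Q) = block_start (cstart Q) (clen Q) M + block_len (clen Q) (depth M).+1.
Proof. by []. Qed.

Lemma hi_cons_gap Q k : let M := Pos.of_succ_nat k in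
  hi (k.+2 :: Q) = block_start (cstart Q) (clen Q) M + block_len (clen Q) (depth M)
                   - block_len (clen Q) (depth M).+1.
Proof. by []. Qed.

Lemma free_itv_cons_gap Q k :
  free_itv (k.+2 :: Q) = gap (cstart Q) (clen Q) (Pos.of_succ_nat k).
Proof. by []. Qed.

Lemma clen_le {Q} : lo Q < hi Q -> clen Q <= (hi Q - lo Q) / 8.
Proof.
rewrite -subr_gt0 => lt_lh.
by have := ler_wpM2r (ltW lt_lh) (cantor_frac_le Q); rewrite /clen; lra.
Qed.

Lemma lo_lt_hi Q : lo Q < hi Q.
Proof.
elim: Q => [|i Q IH]; first by rewrite /lo /hi /=; lra.
have clen_gt0 : 0 < clen Q by rewrite mulr_gt0 ?cantor_frac_gt0 ?subr_gt0.
have := clen_le IH; case: i => [|[|k]] ?.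
- by rewrite lo_cons0 hi_cons0 /cstart; lra.
- by rewrite lo_cons1 hi_cons1 /cstart; lra.
- rewrite lo_cons_gap hi_cons_gap; set M := Pos.of_succ_nat k.
  by have := block_len_gap (clen Q) (depth M); have := gap_len_gt0 _ clen_gt0 (depth M); lra.
Qed.

Lemma clen_gt0 Q : 0 < clen Q.
Proof. by rewrite mulr_gt0 ?cantor_frac_gt0 // subr_gt0 lo_lt_hi. Qed.

Lemma cstart_bounds Q : lo Q < cstart Q /\ cstart Q + clen Q < hi Q.
Proof.
have := clen_le (lo_lt_hi Q); have := clen_gt0 Q; have := lo_lt_hi Q.
by rewrite /cstart; split; lra.
Qed.

Lemma child_bounds Q i : lo Q <= lo (i :: Q) /\ hi (i :: Q) <= hi Q /\
  hi (i :: Q) - lo (i :: Q) <= (hi Q - lo Q) / 2.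
Proof.
have [? ?] := cstart_bounds Q; have := clen_le (lo_lt_hi Q); have cQ := clen_gt0 Q.
case: i => [|[|k]] ?.
- by rewrite lo_cons0 hi_cons0 /cstart; split; [lra|split; lra].
- by rewrite lo_cons1 hi_cons1 /cstart; split; [lra|split; lra].
- rewrite lo_cons_gap hi_cons_gap; set M := Pos.of_succ_nat k.
  have [? ?] := block_bounds (cstart Q) _ cQ M.
  have := block_len_gap (clen Q) (depth M); have := gap_len_le_half _ cQ (depth M).
  have := block_len_le_lam _ cQ (depth M); have := block_len_gt0 _ cQ (depth M).+1.
  by split; [lra|split; lra].
Qed.

Lemma node_len_le Q : hi Q - lo Q <= exp2N (size Q).
Proof.
elim: Q => [|i Q IH] /=; first by rewrite exp2N0 /lo /hi /=; lra.
by have [_ [_ ?]] := child_bounds Q i; rewrite exp2NS; lra.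
Qed.

Lemma node_suffix_bounds S Q : lo Q <= lo (S ++ Q) /\ hi (S ++ Q) <= hi Q.
Proof.
elim: S => [|i S [? ?]] /=; first by split; lra.
by have [? [? _]] := child_bounds (S ++ Q) i; split; lra.
Qed.

Lemma free_itv_suffix S Q : free_itv (S ++ Q) `<=` free_itv Q.
Proof. by move=> x [? ?]; have [? ?] := node_suffix_bounds S Q; split; lra. Qed.

Lemma node_cantor_subset Q : node_cantor Q `<=` free_itv Q.
Proof.
move=> x [[? ?] _]; have [? ?] := cstart_bounds Q.
by rewrite /free_itv /=; split; lra.
Qed.

Lemma node_cantor_child_disj {Q i x} : node_cantor Q x -> ~ free_itv (i :: Q) x.
Proof.
move=> [[? ?] Kx]; case: i => [|[|k]].
- by rewrite /free_itv lo_cons0 hi_cons0 /= => -[_ ?]; lra.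
- by rewrite /free_itv lo_cons1 hi_cons1 /= => -[? _]; lra.
- by rewrite free_itv_cons_gap; apply: Kx.
Qed.

Lemma free_itv_children_disj {Q i j x} : i <> j ->
  free_itv (i :: Q) x -> ~ free_itv (j :: Q) x.
Proof.
have cQ := clen_gt0 Q.
have in_hull k : free_itv (k.+2 :: Q) x -> cstart Q <= x /\ x <= cstart Q + clen Q.
  by rewrite free_itv_cons_gap => /(gap_subset_hull _ _ cQ).
case: i => [|[|k]]; case: j => [|[|k']] //= ij.
- by rewrite /free_itv lo_cons0 hi_cons0 lo_cons1 /= => -[_ ?] [? _]; lra.
- by move=> [_ h1] /in_hull [h2 _]; rewrite hi_cons0 in h1; lra.
- by rewrite /free_itv lo_cons0 hi_cons0 lo_cons1 /= => -[? _] [_ ?]; lra.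
- by move=> [h1 _] /in_hull [_ h2]; rewrite lo_cons1 in h1; lra.
- by move=> /in_hull [h2 _] [_ h1]; rewrite hi_cons0 in h1; lra.
- by move=> /in_hull [_ h2] [h1 _]; rewrite lo_cons1 in h1; lra.
- rewrite !free_itv_cons_gap => /(gap_uniq _ _ cQ) /[apply] kk'; apply: ij.
  have := congr1 Pos.to_nat kk'; rewrite !SuccNat2Pos.id_succ; by case=> ->.
Qed.

Lemma node_cantor_laminar {P Q x} : node_cantor P x -> free_itv Q x ->
  exists S, P = S ++ Q.
Proof.
move=> Px; elim: Q => [|q Q IH] Qx; first by exists P; rewrite cats0.
have [S PS] : exists S, P = S ++ Q.
  by apply: IH; have [? [? _]] := child_bounds Q q; move: Qx => [? ?]; split; lra.
case/lastP: S PS => [|S p] PS.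
  by exfalso; rewrite /= in PS; rewrite PS in Px; exact: node_cantor_child_disj Px Qx.
rewrite cat_rcons in PS.
have pQx : free_itv (p :: Q) x.
  by apply: (free_itv_suffix S); rewrite -PS; exact: node_cantor_subset.
have [<-|pq] := eqVneq p q; first by exists S.
by exfalso; apply: free_itv_children_disj pQx Qx; apply/eqP.
Qed.

(** * The set E *)

Definition Eseq (n : nat) : set R :=
  if (pickle_inv n : option (seq nat)) is Some Q then node_cantor Q else set0.

Definition Eset : set R := \bigcup_n Eseq n.

Lemma node_cantor_subset_Eset Q : node_cantor Q `<=` Eset.
Proof. by move=> x Qx; exists (pickle Q) => //; rewrite /Eseq pickleK_inv. Qed.

Lemma Eset_node_cantor x : Eset x -> exists Q, node_cantor Q x.
Proof. by move=> [n _]; rewrite /Eseq; case: pickle_inv => [Q|] // Qx; exists Q. Qed.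

Lemma closed_Eseq n : closed (Eseq n).
Proof. by rewrite /Eseq; case: pickle_inv => [Q|]; [exact: closed_cantor|exact: closed0]. Qed.

Lemma Eset_Fsigma : Fsigma Eset.
Proof. by exists Eseq; [exact: closed_Eseq|]. Qed.

Lemma Eset_measurable : Lmeasurable Eset.
Proof.
rewrite /Lmeasurable; apply: bigcupT_measurable => n; apply: sub_caratheodory.
exact: measurable_realfun.closed_measurable (closed_Eseq n).
Qed.

Lemma leb_node_cantor P : (leb (node_cantor P) <= (clen P)%:E)%E.
Proof.
apply: le_trans (le_leb (_ : _ `<=` [set x | cstart P <= x /\ x <= cstart P + clen P])) _.
  by move=> x [].
rewrite leb_itv_cc; last by rewrite lerDl; exact/ltW/clen_gt0.
by rewrite lee_fin; lra.
Qed.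

Lemma leb_node_cantor_free_itv P Q :
  (leb (node_cantor P `&` free_itv Q) <= (exp2N (pickle P).+1 * ((hi Q - lo Q) / 4))%:E)%E.
Proof.
have len_ge0 : 0 <= (hi Q - lo Q) / 4 by have := lo_lt_hi Q; lra.
case: (pselect (exists x, node_cantor P x /\ free_itv Q x)) => [[x [Px Qx]]|PQ0]; last first.
  have -> : node_cantor P `&` free_itv Q = set0.
    by apply/seteqP; split => // y [? ?]; apply: PQ0; exists y.
  by rewrite leb_set0 lee_fin mulr_ge0 ?exp2N_ge0.
have [S PS] := node_cantor_laminar Px Qx.
apply: le_trans (le_leb (@subIsetl _ _ _)) _; apply: le_trans (leb_node_cantor P) _.
have [lo_PQ hi_PQ] := node_suffix_bounds S Q; rewrite -PS in lo_PQ hi_PQ.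
rewrite lee_fin /clen.
have -> : cantor_frac P = exp2N (pickle P).+1 / 4 by rewrite /cantor_frac !exp2NS; lra.
by rewrite -[X in X <= _]mulrA ler_wpM2l ?exp2N_ge0 //; lra.
Qed.

Lemma leb_Eset_free_itv Q : (leb (Eset `&` free_itv Q) <= ((hi Q - lo Q) / 4)%:E)%E.
Proof.
have len_ge0 : 0 <= (hi Q - lo Q) / 4 by have := lo_lt_hi Q; lra.
rewrite /Eset setI_bigcupl; apply: le_trans (leb_bigcup_le _) _.
apply: le_trans (epsilon_trick0 xpredT len_ge0).
apply: lee_nneseries => [n _ _|n _]; first exact: leb_ge0.
rewrite /Eseq; case En: (pickle_inv n) => [P|]; last first.
  by rewrite set0I leb_set0 lee_fin divr_ge0 ?ler0n.
have <- : pickle P = n by have := @pickle_invK (seq nat) n; rewrite En.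
apply: le_trans (leb_node_cantor_free_itv P Q) _.
by rewrite lee_fin -exp2N_natr mulrC lexx.
Qed.

Lemma child_meets_itv Q s t : lo Q <= s -> s < t -> t <= hi Q ->
  exists i, lo (i :: Q) < t /\ s < hi (i :: Q).
Proof.
move=> ? st ?; have cQ := clen_gt0 Q; have [? ?] := cstart_bounds Q.
case: (ltP s (cstart Q)) => [?|cs].
  by exists 0%N; rewrite lo_cons0 hi_cons0; split; lra.
case: (ltP (cstart Q + clen Q) t) => [?|tc].
  by exists 1%N; rewrite lo_cons1 hi_cons1; split; lra.
have [M [z [[? ?] [? ?]]]] := gap_meets_itv _ _ cQ cs st tc.
exists (Pos.to_nat M).-1.+2.
by rewrite lo_cons_gap hi_cons_gap Pos_of_succ_nat_pred; split; lra.
Qed.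

Lemma free_itv_in k {s t} : 0 <= s -> s < t -> t <= 1 ->
  exists Q, s <= lo Q /\ hi Q <= t /\ hi Q - lo Q <= exp2N k.
Proof.
move=> s0 st t1; set m := (s + t) / 2; set e := (t - s) / 4.
have e0 : 0 < e by rewrite /e; lra.
have near_m d : exists Q, size Q = d /\ lo Q < m + e /\ m - e < hi Q.
  elim: d => [|d [Q [sQ [? ?]]]].
    by exists [::]; rewrite /lo /hi /= /m /e; split => //; split; lra.
  have := lo_lt_hi Q => ?.
  have [s' [? [? [? ?]]]] : exists s', lo Q <= s' /\ m - e <= s' /\ s' < m + e /\ s' < hi Q.
    by case: (leP (lo Q) (m - e)) => ?; [exists (m - e)|exists (lo Q)]; split; lra.
  have [t' [? [? [? ?]]]] : exists t', t' <= hi Q /\ t' <= m + e /\ s' < t' /\ m - e < t'.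
    by case: (leP (hi Q) (m + e)) => ?; [exists (hi Q)|exists (m + e)]; split; lra.
  have [i [? ?]] := @child_meets_itv Q s' t' ltac:(lra) ltac:(lra) ltac:(lra).
  by exists (i :: Q); split; [rewrite /= sQ|split; lra].
have [d de] := exp2N_small e0.
have [Q [sQ [Qm1 Qm2]]] := near_m (k + d)%N.
have := node_len_le Q; rewrite sQ => ?.
have := @exp2N_le k (k + d) (leq_addr _ _); have := @exp2N_le d (k + d) (leq_addl _ _).
rewrite /m /e in de Qm1 Qm2.
by exists Q; split; [|split]; lra.
Qed.

Lemma leb_Eset_itv_gt0 {s t} : 0 <= s -> s < t -> t <= 1 ->
  (0 < leb (Eset `&` [set z | (s < z)%R /\ (z < t)%R]))%E.
Proof.
move=> s0 st t1; have [Q [? [? _]]] := free_itv_in 0 s0 st t1.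
apply: lt_le_trans (cantor_leb_gt0 (cstart Q) _ (clen_gt0 Q)) _.
apply: le_leb => x Qx; split; first exact: node_cantor_subset_Eset Q _ Qx.
by have [? ?] := node_cantor_subset Q _ Qx; split; lra.
Qed.

Definition gamma_seq (n : nat) : R := 1 - exp2N n.+1.

Definition delta_seq (n : nat) : R := exp2N (4 * n) / 8.

Lemma gamma_seq_incr : incr_to_one gamma_seq.
Proof.
split; [move=> n|split; [move=> m n mn|]].
- by rewrite subr_gt0 exp2NS; have := exp2N_le1 n; lra.
- by rewrite lerD2l lerN2; exact: exp2N_le.
- apply: cvg_exp2N_dist => n; have -> : 1 - gamma_seq n = exp2N n.+1 by rewrite /gamma_seq; ring.
  by rewrite ger0_norm ?exp2N_ge0 //; exact: exp2N_le (leqnSn n).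
Qed.

Lemma delta_seq_decr : decr_to_zero delta_seq.
Proof.
split; [move=> n|split; [move=> m n mn|]].
- by rewrite divr_gt0 ?exp2N_gt0.
- by rewrite ler_pM2r //; apply: exp2N_le; lia.
- apply: cvg_exp2N_dist => n; rewrite /delta_seq sub0r normrN ger0_norm ?divr_ge0 ?exp2N_ge0 //.
  by have := @exp2N_le n (4 * n) ltac:(lia); have := exp2N_ge0 (4 * n); lra.
Qed.

Lemma node_cantor_Egd Q x n : node_cantor Q x -> exp2N (2 * n) <= clen Q ->
  Egd Eset (gamma_seq n) (delta_seq n) x.
Proof.
move=> Qx nQ r r0 rn.
have rQ : r <= clen Q * exp2N (2 * n) / 8.
  have e : (4 * n = 2 * n + 2 * n)%N by lia.
  move: rn; rewrite /delta_seq e exp2ND.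
  by have := ler_wpM2r (exp2N_ge0 (2 * n)) nQ; lra.
have QE (A : set R) : A `&` node_cantor Q `<=` A `&` Eset.
  by apply: setIS; exact: node_cantor_subset_Eset.
rewrite le_max; apply/orP.
by have [h|h] := cantor_density _ _ (clen_gt0 Q) Qx r0 rQ; [right|left];
  rewrite -set_itv_oo; exact: le_density r0 (QE _) h.
Qed.

Lemma Eset_SUDT : SUDT Eset.
Proof.
split; first exact: Eset_measurable.
exists gamma_seq, delta_seq; split; first exact: gamma_seq_incr.
split; first exact: delta_seq_decr.
move=> x /Eset_node_cantor [Q Qx]; have [k kQ] := exp2N_small (clen_gt0 Q).
exists k => // n /= kn; apply: node_cantor_Egd Qx _.
by apply: le_trans (ltW kQ); apply: exp2N_le; lia.
Qed.

(** * Baire category and the failure of UDT *)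

Definition unit_itv : set R := [set x | 0 <= x /\ x <= 1].

Lemma open_unit_itvC : open (~` unit_itv).
Proof. by apply: closed_openC; exact: closed_itv_cc. Qed.

Lemma open_nonempty_itv {D : set R} : open D -> D !=set0 ->
  (D `&` ~` unit_itv) !=set0 \/
  exists s t, 0 <= s /\ s < t /\ t <= 1 /\ [set z | s < z /\ z < t] `<=` D.
Proof.
move=> oD [z Dz]; case: (pselect (unit_itv z)) => [[z0 z1]|nz]; last by left; exists z.
right; have /nbhs_ballP [e /= e0 eD] := oD z Dz.
set e' := Num.min (e / 2) (1 / 2).
have e'0 : 0 < e' by rewrite lt_min; apply/andP; split; lra.
have e'e : e' <= e / 2 by rewrite ge_min lexx.
have e'1 : e' <= 1 / 2 by rewrite ge_min lexx orbT.
have ze'D s t : z - e' <= s -> t <= z + e' -> [set w | s < w /\ w < t] `<=` D.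
  by move=> ? ? w [? ?]; apply: eD; rewrite /ball /= ltr_distlC; apply/andP; split; lra.
case: (leP e' z) => ?.
  by exists (z - e'), z; split; [lra|split; [lra|split; [lra|apply: ze'D; lra]]].
by exists z, (z + e'); split; [lra|split; [lra|split; [lra|apply: ze'D; lra]]].
Qed.

Lemma dense_setU_unit_itvC (A : set R) :
  (forall s t, 0 <= s -> s < t -> t <= 1 -> exists x, A x /\ s < x /\ x < t) ->
  dense (A `|` ~` unit_itv).
Proof.
move=> Ast D D0 oD.
have [[z [Dz nz]]|[s [t [s0 [st [t1 stD]]]]]] := open_nonempty_itv oD D0.
  by exists z; split => //; right.
by have [x [Ax xst]] := Ast s t s0 st t1; exists x; split; [exact: stD|left].
Qed.

Lemma Baire_unit_itv (A : nat -> set R) : (forall n, open (A n)) ->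
  (forall n, dense (A n `|` ~` unit_itv)) -> exists y, forall n, A n y.
Proof.
move=> oA dA.
have oAU n : open (A n `|` ~` unit_itv) /\ dense (A n `|` ~` unit_itv).
  by split; [exact: openU (oA n) open_unit_itvC|exact: dA].
have [|y [[y0 y1] Ay]] := @Baire _ R^o _ oAU [set z | 0 < z /\ z < 1] _ (open_itv_oo 0 1).
  by exists (1 / 2); split; lra.
by exists y => n; have [//|[]] := Ay n I; split; lra.
Qed.

Lemma ae_Eset_meets_itv {Et : set R} {s t : R} : leb (Eset `\` Et) = 0%E ->
  0 <= s -> s < t -> t <= 1 -> exists x, Et x /\ s < x /\ x < t.
Proof.
move=> EEt s0 st t1.
have : (0 < leb ([set z | (s < z)%R /\ (z < t)%R] `&` Et))%E.
  apply: lt_le_trans (leb_Eset_itv_gt0 s0 st t1) _.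
  by rewrite setIC; exact: leb_setI_null_le.
by move=> /leb_gt0_neq0 [x [[? ?] ?]]; exists x.
Qed.

Definition window Q : set R :=
  [set x | (lo Q + hi Q) / 2 - (hi Q - lo Q) / 8 < x /\
           x < (lo Q + hi Q) / 2 + (hi Q - lo Q) / 8].

Definition windows (k : nat) : set R :=
  \bigcup_(Q in [set Q | hi Q - lo Q <= exp2N k]) window Q.

Lemma open_windows k : open (windows k).
Proof. by apply: bigcup_open => Q _; exact: open_itv_oo. Qed.

Lemma windows_meet_itv k s t : 0 <= s -> s < t -> t <= 1 ->
  exists x, windows k x /\ s < x /\ x < t.
Proof.
move=> s0 st t1; have [Q [? [? Qk]]] := free_itv_in k s0 st t1.
have := lo_lt_hi Q => ?; exists ((lo Q + hi Q) / 2); split; last by split; lra.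
by exists Q => //; rewrite /window /=; split; lra.
Qed.

Lemma window_Egd_le {Et : set R} {Q y} {g d : R} : leb (Et `\` Eset) = 0%E ->
  window Q y -> 3 * (hi Q - lo Q) / 8 <= d -> Egd Et g d y -> g <= 2 / 3.
Proof.
move=> EtE [y1 y2] rd; have := lo_lt_hi Q => ?.
have r0 : 0 < 3 * (hi Q - lo Q) / 8 by lra.
move=> /(_ _ r0 rd); rewrite -!set_itv_oo.
have rinv_ge0 : (0 <= ((3 * (hi Q - lo Q) / 8)^-1)%:E)%E by rewrite lee_fin invr_ge0 ltW.
have dens (A : set R) : A `<=` free_itv Q ->
    (leb (A `&` Et) * ((3 * (hi Q - lo Q) / 8)^-1)%:E <= (2 / 3)%:E)%E.
  move=> AQ; have AEt : (leb (A `&` Et) <= ((hi Q - lo Q) / 4)%:E)%E.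
    apply: le_trans (leb_setI_null_le A EtE) (le_trans _ (leb_Eset_free_itv Q)).
    by apply: le_leb => z [Az Ez]; split => //; exact: AQ.
  apply: le_trans (lee_wpmul2r rinv_ge0 AEt) _; rewrite -EFinM.
  have -> : (hi Q - lo Q) / 4 * (3 * (hi Q - lo Q) / 8)^-1 = 2 / 3.
    by field; rewrite gt_eqF // subr_gt0.
  exact: lexx.
move=> g_max; have : (g%:E <= (2 / 3)%:E)%E.
  by apply: le_trans g_max _; rewrite ge_max; apply/andP; split; apply: dens => z [? ?];
    rewrite /free_itv /=; split; lra.
by rewrite lee_fin.
Qed.

Theorem theorem1p4 :
  exists E : set R, Fsigma E /\ SUDT E /\
    forall Et : set R, Gdelta Et ->
      leb ((E `\` Et) `|` (Et `\` E)) = 0%E -> ~ UDT Et.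
Proof.
exists Eset; split; first exact: Eset_Fsigma.
split; first exact: Eset_SUDT.
move=> Et [U oU EtU] /leb_symdiff_eq0 [EEt EtE] [_ [g [d [[_ [_ g1]] [[d0 _] EtEgd]]]]].
have [y yUW] : exists y, forall n, (U n `&` windows n) y.
  apply: Baire_unit_itv => n; first exact: openI (oU n) (open_windows n).
  rewrite setUIl; apply: denseI; first exact: openU (oU n) open_unit_itvC.
    apply: dense_setU_unit_itvC => s t s0 st t1.
    have [x [Etx xst]] := ae_Eset_meets_itv EEt s0 st t1.
    by exists x; split => //; move: Etx; rewrite EtU; apply.
  by apply: dense_setU_unit_itvC; exact: windows_meet_itv.
have yEt : Et y by rewrite EtU => n _; case: (yUW n).
have [k0 _ gk0] := cvgr_gt _ g1 (2 / 3) ltac:(lra).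
have [n k0n Egd_y] := EtEgd y yEt k0 I.
have [k dk] := exp2N_small (d0 n).
have [_ [Q Qk yQ]] := yUW k.
have rd : 3 * (hi Q - lo Q) / 8 <= d n.
  by have := lo_lt_hi Q; have : hi Q - lo Q <= exp2N k := Qk; lra.
by have := window_Egd_le EtE yQ rd Egd_y; have := gk0 n k0n; lra.
Qed.
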